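(* The vector $\mathbf{w}:=\mathbf{M}(\mathbf{t}-\mathbf{t}_{\uparrow})/\|\mathbf{M}(\mathbf{t}-\mathbf{t}_{\uparrow})\|_1$ computed in Algorithm 1 is a weight vector, i.e., $\mathbf{w}\geq 0$ and $\|\mathbf{w}\|_1=1$.
   Context: $\mathbf{M}$ is a symmetric positive-definite matrix defining the norm $\|\mathbf{v}\|^2=\mathbf{v}^T\mathbf{M}\mathbf{v}$; $\|\cdot\|_1$ is the 1-norm. In Algorithm 1 (point-oriented Pareto computation), $\mathbf{t}\in\mathbb{R}^{m}$ is the given threshold vector, $\Phi$ is a nonempty finite set of points, $\mathrm{down}(\Phi)$ is the downward closure of the convex hull of $\Phi$, and $\mathbf{t}_{\uparrow}$ is the point $\mathbf{x}\in\mathrm{down}(\Phi)$ minimising $\|\mathbf{t}-\mathbf{x}\|$; $\mathbf{w}$ is computed in an iteration of the while loop (which runs only while $\|\mathbf{t}_{\downarrow}-\mathbf{t}_{\uparrow}\|>\varepsilon$), so that $\mathbf{t}\neq\mathbf{t}_{\uparrow}$, i.e. $\mathbf{t}\notin\mathrm{down}(\Phi)$. *)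

From HB Require Import structures.
From mathcomp Require Import all_boot all_order all_algebra.
From mathcomp Require Import reals.
Set Implicit Arguments. Unset Strict Implicit. Unset Printing Implicit Defensive.
Import Order.TTheory GRing.Theory Num.Theory.
Local Open Scope ring_scope.

Section Defs.
Variables (R : realType) (m : nat).

Definition sym_posdef (M : 'M[R]_m) : Prop :=
  M^T = M /\ forall v : 'cV[R]_m, v != 0 -> 0 < (v^T *m M *m v) 0 0.

Definition normM (M : 'M[R]_m) (v : 'cV[R]_m) : R :=
  Num.sqrt ((v^T *m M *m v) 0 0).

Definition norm1 (v : 'cV[R]_m) : R := \sum_(i < m) `|v i 0|.

Definition in_conv (Phi : seq 'cV[R]_m) (x : 'cV[R]_m) : Prop :=
  exists lam : 'I_(size Phi) -> R,
    (forall k, 0 <= lam k) /\ \sum_k lam k = 1 /\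
    x = \sum_k lam k *: nth 0 Phi k.

Definition in_down (Phi : seq 'cV[R]_m) (x : 'cV[R]_m) : Prop :=
  exists y, in_conv Phi y /\ forall i, x i 0 <= y i 0.

End Defs.

From HB Require Import structures.
From mathcomp Require Import all_boot all_order all_algebra.
From mathcomp Require Import reals.
From mathcomp Require Import ring lra.
Import Order.TTheory GRing.Theory Num.Theory.
Local Open Scope ring_scope.

(* Since down(Phi) is closed under lowering any coordinate, t_up - s e_i is
   feasible for every s >= 0; if the i-th coordinate of M (t - t_up) were
   negative, a small such step would bring the point strictly M-closer to t.
   Hence M (t - t_up) >= 0, and it is nonzero because t <> t_up and M is
   positive definite, so dividing it by its 1-norm gives a weight vector. *)

Section QuadraticForm.
Variables (R : realType) (m : nat) (M : 'M[R]_m).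

Definition qform (u v : 'cV[R]_m) : R := (u^T *m M *m v) 0 0.

Lemma qformC (u v : 'cV[R]_m) : M^T = M -> qform u v = qform v u.
Proof.
move=> MT; have trE (A : 'M[R]_1) : A 0 0 = A^T 0 0 by rewrite mxE.
by rewrite /qform trE !trmx_mul trmxK MT mulmxA.
Qed.

Lemma qformDZ (v e : 'cV[R]_m) (s : R) : M^T = M ->
  qform (v + s *: e) (v + s *: e) =
  qform v v + 2 * s * qform e v + s ^+ 2 * qform e e.
Proof.
rewrite /qform => MT; have -> : (v + s *: e)^T = v^T + s *: e^T.
  by apply/matrixP => i j; rewrite !mxE.
have mx11D (A B : 'M[R]_1) : (A + B) 0 0 = A 0 0 + B 0 0 by rewrite mxE.
have mx11Z k (A : 'M[R]_1) : (k *: A) 0 0 = k * A 0 0 by rewrite mxE.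
rewrite !mulmxDl !mulmxDr -!scalemxAr -!scalemxAl !mx11D !mx11Z.
by rewrite -/(qform v e) (qformC v e MT) /qform; ring.
Qed.

Lemma qform_delta_l (i : 'I_m) (v : 'cV[R]_m) :
  qform (delta_mx i 0) v = (M *m v) i 0.
Proof. by rewrite /qform -mulmxA trmx_delta -rowE mxE. Qed.

Lemma posdef_qform_ge0 (v : 'cV[R]_m) : sym_posdef M -> 0 <= qform v v.
Proof.
case=> _ Mpos; have [->|v0] := eqVneq v 0.
  by rewrite /qform trmx0 !mul0mx mxE.
exact/ltW/Mpos.
Qed.

Lemma posdef_mulmx_neq0 (v : 'cV[R]_m) : sym_posdef M -> v != 0 -> M *m v != 0.
Proof.
case=> _ Mpos /Mpos; apply: contraTneq => Mv0.
by rewrite -mulmxA Mv0 mulmx0 mxE ltxx.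
Qed.

Lemma normM_le_qform (u v : 'cV[R]_m) : sym_posdef M ->
  normM M u <= normM M v -> qform u u <= qform v v.
Proof. by move=> MP; rewrite /normM ler_sqrt // posdef_qform_ge0. Qed.

(* First-order optimality of an M-projection onto a downward closed set D:
   for b := (M (t - t_up))_i < 0 and c := e_i^T M e_i, the step
   s := -b / c changes the squared M-distance to t by 2 s b + s^2 c = s b < 0. *)
Lemma downward_argmin_mulmx_ge0 (D : 'cV[R]_m -> Prop) (t tup : 'cV[R]_m) :
  sym_posdef M ->
  (forall x y : 'cV[R]_m, D x -> (forall i, y i 0 <= x i 0) -> D y) ->
  D tup -> (forall x, D x -> normM M (t - tup) <= normM M (t - x)) ->
  forall i, 0 <= (M *m (t - tup)) i 0.
Proof.
move=> MP D_down Dtup tup_min i; rewrite leNgt; apply/negP => b_lt0.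
set e : 'cV[R]_m := delta_mx i 0.
have c_gt0 : 0 < qform e e.
  apply: MP.2; apply/eqP => /matrixP /(_ i 0).
  by rewrite !mxE !eqxx => /eqP; rewrite oner_eq0.
set b := (M *m (t - tup)) i 0 in b_lt0; set c := qform e e in c_gt0.
set s := - b / c.
have s_gt0 : 0 < s by rewrite divr_gt0 // oppr_gt0.
have sc : s * c = - b by rewrite /s mulrAC -mulrA divff ?mulr1 // gt_eqF.
have D_step : D (tup - s *: e).
  by apply: D_down Dtup _ => j; rewrite !mxE lerBlDr lerDl mulr_ge0 ?ler0n ?ltW.
have := normM_le_qform _ _ MP (tup_min _ D_step).
have -> : t - (tup - s *: e) = (t - tup) + s *: e by rewrite opprB addrA addrAC.
rewrite qformDZ ?MP.1 // qform_delta_l -/b -/c expr2 -[s * s * c]mulrA sc.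
have : s * b < 0 by rewrite pmulr_rlt0.
lra.
Qed.

End QuadraticForm.

Section OneNorm.
Variables (R : realType) (m : nat).

Lemma norm1_gt0 (v : 'cV[R]_m) : v != 0 -> 0 < norm1 v.
Proof.
move=> v0; rewrite lt_def sumr_ge0 // andbT; apply: contra v0 => /eqP norm0.
apply/eqP/matrixP => i j; rewrite ord1 mxE; apply/normr0_eq0.
exact: psumr_eq0P norm0 i isT.
Qed.

Lemma norm1Z (k : R) (v : 'cV[R]_m) : norm1 (k *: v) = `|k| * norm1 v.
Proof. by rewrite /norm1 mulr_sumr; apply: eq_bigr => i _; rewrite mxE normrM. Qed.

Lemma norm1_normalize_weight (v : 'cV[R]_m) :
  (forall i, 0 <= v i 0) -> v != 0 ->
  let w := (norm1 v)^-1 *: v in (forall i, 0 <= w i 0) /\ norm1 w = 1.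
Proof.
move=> v_ge0 /norm1_gt0 N_gt0 w; split.
  by move=> i; rewrite mxE mulr_ge0 // invr_ge0 ltW.
by rewrite norm1Z ger0_norm ?invr_ge0 ?ltW // mulVf // gt_eqF.
Qed.

End OneNorm.

Lemma in_down_le (R : realType) (m : nat) (Phi : seq 'cV[R]_m) (x y : 'cV[R]_m) :
  in_down Phi x -> (forall i, y i 0 <= x i 0) -> in_down Phi y.
Proof.
case=> z [conv_z x_le_z] y_le_x; exists z; split => // i.
exact: le_trans (y_le_x i) (x_le_z i).
Qed.

Theorem lemma8 (R : realType) (m : nat) (M : 'M[R]_m) (Phi : seq 'cV[R]_m)
    (t tup : 'cV[R]_m) :
  sym_posdef M ->
  Phi != [::] ->
  in_down Phi tup ->
  (forall x, in_down Phi x -> normM M (t - tup) <= normM M (t - x)) ->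
  ~ in_down Phi t ->
  let w := (norm1 (M *m (t - tup)))^-1 *: (M *m (t - tup)) in
  (forall i, 0 <= w i 0) /\ norm1 w = 1.
Proof.
move=> MP _ tup_down tup_min t_notin.
have d_neq0 : t - tup != 0.
  by rewrite subr_eq0; apply: contraPneq t_notin => ->.
apply: norm1_normalize_weight.
  exact: downward_argmin_mulmx_ge0 MP (@in_down_le R m Phi) tup_down tup_min.
exact: posdef_mulmx_neq0.
Qed.
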